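(* Assume the standing setup below. Let $s$ be a real number such that for some index $i$ with $1\le i\le k$ we have $s_i\le s$ and $s+r<s_{i+1}$. Then: (1) the simplicial complex $V_s(X)(y)$ is connected (and nonempty); (2) the function $\pi_0V_s(X)\to\pi_0V_s(Y)$, $[x]_{s,X}\mapsto[x]_{s,Y}$, induced by the inclusion $V_s(X)\subseteq V_s(Y)$, is a bijection.
   Context: For a finite set $Z\subset\mathbb{R}^n$ and a real number $s\ge 0$, the Vietoris–Rips complex $V_s(Z)$ is the simplicial complex with vertex set $Z$ whose simplices are the nonempty subsets $\sigma\subseteq Z$ with $d(z,z')\le s$ for all $z,z'\in\sigma$ ($d$ the Euclidean distance). For $z\in Z$, $[z]_{s,Z}\subseteq Z$ denotes the set of vertices of the path component of $V_s(Z)$ containing $z$. Standing setup: $X\subset\mathbb{R}^n$ is a finite set with at least two points, $y\in\mathbb{R}^n\setminus X$, $Y=X\sqcup\{y\}$. The phase change numbers of $X$ are the distinct values $0=s_0<s_1<\dots<s_k$ of $d(x,x')$ for $x,x'\in X$; set $s_{k+1}=+\infty$. There are $x_0\in X$ and a real $r>0$ with $d(y,x_0)<r$ and $r<s_{i+1}-s_i$ for all $0\le i<k$. For $s\ge0$, $V_s(X)(y)$ denotes the full subcomplex of $V_s(X)$ on the set of vertices $x\in X$ with $[x]_{s,Y}=[y]_{s,Y}$ (a full subcomplex on a vertex set $W$ consists of all simplices whose vertices all lie in $W$). *)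

(* points of R^n are row vectors 'rV[R]_n over a real closed
   field R (R = the reals is the intended instance). *)
From HB Require Import structures.
From mathcomp Require Import all_boot all_order all_algebra.
Set Implicit Arguments. Unset Strict Implicit. Unset Printing Implicit Defensive.
Import Order.TTheory GRing.Theory Num.Theory.
Local Open Scope ring_scope.

Definition dist {R : rcfType} {n : nat} (x y : 'rV[R]_n) : R :=
  Num.sqrt (\sum_(i < n) (x ord0 i - y ord0 i) ^+ 2).

(* A simplicial complex on vertices of type V, given by its set of simplices
   (a simplex is represented by a finite list of its vertices). *)
Definition complex (V : Type) := seq V -> Prop.

Definition VR {R : rcfType} {n : nat} (s : R) (Z : seq 'rV[R]_n)
  : complex 'rV[R]_n :=
  fun sigma => sigma <> [::] /\ {subset sigma <= Z} /\
    (forall a b, a \in sigma -> b \in sigma -> dist a b <= s).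

Fixpoint chain {V : Type} (K : complex V) (u : V) (p : seq V) : Prop :=
  match p with
  | [::] => True
  | v :: p' => K [:: u; v] /\ chain K v p'
  end.

Definition ppath {V : Type} (K : complex V) (u v : V) : Prop :=
  K [:: u] /\ exists p : seq V, chain K u p /\ last u p = v.

Definition comp {V : Type} (K : complex V) (u : V) : V -> Prop :=
  fun v => ppath K u v.

Definition cls {R : rcfType} {n : nat} (s : R) (Z : seq 'rV[R]_n)
  (z : 'rV[R]_n) : 'rV[R]_n -> Prop := comp (VR s Z) z.

Definition full {V : eqType} (K : complex V) (W : V -> Prop) : complex V :=
  fun sigma => K sigma /\ (forall v, v \in sigma -> W v).

Definition VsXy {R : rcfType} {n : nat} (s : R) (X : seq 'rV[R]_n)
  (y : 'rV[R]_n) : complex 'rV[R]_n :=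
  full (VR s X) (fun x => cls s (y :: X) x = cls s (y :: X) y).

Definition connected {V : Type} (K : complex V) : Prop :=
  (exists v, K [:: v]) /\ (forall u v, K [:: u] -> K [:: v] -> ppath K u v).

(* C is an element of pi_0 K *)
Definition isComp {V : Type} (K : complex V) (C : V -> Prop) : Prop :=
  exists x, K [:: x] /\ C = comp K x.

(* The assignment [x]_{K1} |-> [x]_{K2} (x a vertex of K1) is a well-defined
   function pi_0 K1 -> pi_0 K2, and it is a bijection. *)
Definition pi0_induced_bijective {V : Type} (K1 K2 : complex V) : Prop :=
  let rel := fun C D => exists x, K1 [:: x] /\ C = comp K1 x /\ D = comp K2 x in
  (forall C, isComp K1 C ->
     exists D, [/\ isComp K2 D, rel C D & forall D', rel C D' -> D' = D]) /\
  (forall D, isComp K2 D ->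
     exists C, [/\ isComp K1 C, rel C D &
                   forall C', isComp K1 C' -> rel C' D -> C' = C]).

(* phase change numbers s_0 < s_1 < ... < s_k of X, as a sorted list *)
Definition phase {R : rcfType} {n : nat} (X : seq 'rV[R]_n) : seq R :=
  sort <=%R (undup [seq dist a b | a <- X, b <- X]).

From Pilot Require Import Defs.
From HB Require Import structures.
From mathcomp Require Import all_boot all_order all_algebra.
From mathcomp Require Import ring lra.
From Stdlib Require Import FunctionalExtensionality PropExtensionality.
Import Order.TTheory GRing.Theory Num.Theory.
Local Open Scope ring_scope.

(* Let K1 = V_s(X) and K2 = V_s(Y), Y = X + {y}.  The vertex map
   f : Y -> X sending y to x0 and fixing X is a retraction of K2 onto K1 that
   is simplicial and moves every vertex only inside its own K2-component.  The
   combinatorial heart is then an abstract statement about such "component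
   retractions" of a subcomplex K1 <= K2: the induced map pi_0 K1 -> pi_0 K2
   is a bijection, and for every vertex y of K2 the full subcomplex of K1 on
   the vertices K2-connected to y is connected (it is reached from f y).
   The only geometric input is that f is simplicial, i.e. that
   d(y,z) <= s forces d(x0,z) <= s for z in X: by the triangle inequality
   d(x0,z) < s + r, and d(x0,z) is a phase change number, none of which lies
   in the gap (s, s + r) because s_i <= s and s + r < s_(i+1). *)

Section EuclideanDistance.
Variables (R : rcfType) (n : nat).

Lemma sumsq_ge0 (a : 'I_n -> R) : 0 <= \sum_i a i ^+ 2.
Proof. by apply: sumr_ge0 => i _; exact: sqr_ge0. Qed.

Lemma sumsq_eq0 (a : 'I_n -> R) : \sum_i a i ^+ 2 = 0 -> forall i, a i = 0.
Proof.
move/eqP; rewrite psumr_eq0 => [/allP Ha i|i _]; last exact: sqr_ge0.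
by apply/eqP; rewrite -sqrf_eq0; apply: Ha; rewrite mem_index_enum.
Qed.

Lemma cauchy_schwarz (a b : 'I_n -> R) :
  \sum_i a i * b i <= Num.sqrt (\sum_i a i ^+ 2) * Num.sqrt (\sum_i b i ^+ 2).
Proof.
set A := \sum_i a i ^+ 2; set B := \sum_i b i ^+ 2.
have [/sumsq_eq0 a0|nzA] := eqVneq A 0.
  by rewrite big1 ?mulr_ge0 ?sqrtr_ge0 // => i _; rewrite a0 mul0r.
have [/sumsq_eq0 b0|nzB] := eqVneq B 0.
  by rewrite big1 ?mulr_ge0 ?sqrtr_ge0 // => i _; rewrite b0 mulr0.
set al := Num.sqrt A; set be := Num.sqrt B.
have alA : al ^+ 2 = A := sqr_sqrtr (sumsq_ge0 a).
have beB : be ^+ 2 = B := sqr_sqrtr (sumsq_ge0 b).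
have al_gt0 : 0 < al by rewrite sqrtr_gt0 lt0r nzA sumsq_ge0.
have be_gt0 : 0 < be by rewrite sqrtr_gt0 lt0r nzB sumsq_ge0.
(* 0 <= sum_i (a_i be - b_i al)^2 = 2 al be (al be - sum_i a_i b_i) *)
have expand : \sum_i (a i * be - b i * al) ^+ 2
    = A * be ^+ 2 - 2 * (\sum_i a i * b i) * (al * be) + B * al ^+ 2.
  rewrite /A /B mulr_sumr !mulr_suml -sumrN -!big_split /=.
  by apply: eq_bigr => i _; ring.
have := sumsq_ge0 (fun i => a i * be - b i * al); rewrite expand -alA -beB.
have := mulr_gt0 al_gt0 be_gt0; nra.
Qed.

Lemma dist_triangle (x y z : 'rV[R]_n) : dist x z <= dist x y + dist y z.
Proof.
rewrite /dist.
set a := fun i : 'I_n => x ord0 i - y ord0 i.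
set b := fun i : 'I_n => y ord0 i - z ord0 i.
have -> : \sum_(i < n) (x ord0 i - z ord0 i) ^+ 2 =
    \sum_i a i ^+ 2 + 2 * (\sum_i a i * b i) + \sum_i b i ^+ 2.
  by rewrite mulr_sumr -!big_split /=; apply: eq_bigr => i _; rewrite /a /b; ring.
have := cauchy_schwarz a b.
have := sqr_sqrtr (sumsq_ge0 a); have := sqr_sqrtr (sumsq_ge0 b).
have := sqrtr_ge0 (\sum_i a i ^+ 2); have := sqrtr_ge0 (\sum_i b i ^+ 2).
set A := \sum_i a i ^+ 2; set B := \sum_i b i ^+ 2.
set al := Num.sqrt A; set be := Num.sqrt B => be0 al0 beB alA CS.
rewrite -(ger0_norm (addr_ge0 al0 be0)) -sqrtr_sqr ler_sqrt ?sqr_ge0 //.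
nra.
Qed.

Lemma dist_sym (x y : 'rV[R]_n) : dist x y = dist y x.
Proof. by rewrite /dist; congr Num.sqrt; apply: eq_bigr => i _; rewrite -sqrrN opprB. Qed.

Lemma dist_xx (x : 'rV[R]_n) : dist x x = 0.
Proof. by rewrite /dist big1 ?sqrtr0 // => i _; rewrite subrr expr0n. Qed.

Lemma dist_ge0 (x y : 'rV[R]_n) : 0 <= dist x y.
Proof. exact: sqrtr_ge0. Qed.

End EuclideanDistance.

Arguments dist_triangle {R n}.
Arguments dist_sym {R n}.
Arguments dist_xx {R n}.
Arguments dist_ge0 {R n}.

Section PathComponents.
Variable V : eqType.

Definition dclosed (K : complex V) : Prop := forall sigma tau : seq V,
  K sigma -> tau <> [::] -> {subset tau <= sigma} -> K tau.

Lemma ppath_map (K1 K2 : complex V) (f : V -> V) :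
  (forall u, K1 [:: u] -> K2 [:: f u]) ->
  (forall u v, K1 [:: u; v] -> K2 [:: f u; f v]) ->
  forall u v, ppath K1 u v -> ppath K2 (f u) (f v).
Proof.
move=> f_vert f_edge u v [Ku [p [Hp <-]]]; split; first exact: f_vert.
exists (map f p); rewrite last_map; split => //.
by elim: p u {Ku} Hp => [|w p IH] u //= [Huw Hp]; split; auto.
Qed.

Lemma ppath_mono (K1 K2 : complex V) :
  (forall sigma, K1 sigma -> K2 sigma) ->
  forall u v, ppath K1 u v -> ppath K2 u v.
Proof. by move=> sub12; apply: (@ppath_map K1 K2 id) => *; apply: sub12. Qed.

Lemma ppath_full (K : complex V) (P : V -> Prop) u v : P u ->
  (forall a b, K [:: a; b] -> P a -> P b) -> ppath K u v -> ppath (full K P) u v.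
Proof.
move=> Pu P_edge [Ku [p [Hp Hl]]]; split.
  by split => // w; rewrite inE => /eqP ->.
exists p; split => //.
elim: p u Pu {Ku Hl} Hp => [|w p IH] u Pu //= [Kuw Hp].
have Pw := P_edge _ _ Kuw Pu; split; last exact: IH.
by split => // v'; rewrite !inE => /orP[] /eqP ->.
Qed.

Lemma full_dclosed (K : complex V) (P : V -> Prop) : dclosed K -> dclosed (full K P).
Proof.
move=> Kc sigma tau [Ks HP] tau0 sub; split; first exact: Kc _ _ Ks tau0 sub.
by move=> v /sub /HP.
Qed.

Variable K : complex V.
Hypothesis Kc : dclosed K.

Lemma edge_sym u v : K [:: u; v] -> K [:: v; u].
Proof. by move=> H; apply: (Kc _ _ H) => // w; rewrite !inE orbC. Qed.

Lemma edge_target u v : K [:: u; v] -> K [:: v].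
Proof. by move=> H; apply: (Kc _ _ H) => // w; rewrite !inE => /eqP ->; rewrite eqxx orbT. Qed.

Lemma ppath_refl u : K [:: u] -> ppath K u u.
Proof. by move=> Ku; split => //; exists [::]. Qed.

Lemma ppath_edge u v : K [:: u; v] -> ppath K u v.
Proof.
move=> Kuv; split; last by exists [:: v].
by apply: (Kc _ _ Kuv) => // w; rewrite !inE => /eqP ->; rewrite eqxx.
Qed.

Lemma ppath_trans u v w : ppath K u v -> ppath K v w -> ppath K u w.
Proof.
move=> [Ku [p [Hp Hpv]]] [_ [q [Hq Hqw]]]; split => //.
exists (p ++ q); rewrite last_cat Hpv; split => //.
by elim: p u {Ku} Hp Hpv => [|x p IH] u /= => [_ -> //|[Kux Hp] Hpv]; split; auto.
Qed.

Lemma ppath_sym u v : ppath K u v -> ppath K v u.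
Proof.
move=> [Ku [p [Hp <-]]]; elim: p u Ku Hp => [|w p IH] u Ku /= Hp.
  exact: ppath_refl.
case: Hp => Kuw Hp.
exact: ppath_trans _ _ _ (IH _ (edge_target _ _ Kuw) Hp) (ppath_edge _ _ (edge_sym _ _ Kuw)).
Qed.

Lemma comp_eq u v : ppath K u v -> Defs.comp K u = Defs.comp K v.
Proof.
move=> Huv; apply: functional_extensionality => w.
apply: propositional_extensionality; split => Hw.
  exact: ppath_trans _ _ _ (ppath_sym _ _ Huv) Hw.
exact: ppath_trans _ _ _ Huv Hw.
Qed.

Lemma comp_eq_ppath u v : K [:: v] -> Defs.comp K u = Defs.comp K v -> ppath K u v.
Proof.
move=> Kv Euv; have : Defs.comp K v v by exact: ppath_refl.
by rewrite -Euv.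
Qed.

End PathComponents.

Arguments dclosed {V}.
Arguments ppath_sym {V K} Kc {u v}.
Arguments ppath_trans {V K u v w}.
Arguments ppath_edge {V K} Kc {u v}.
Arguments comp_eq {V K} Kc {u v}.
Arguments comp_eq_ppath {V K u v}.
Arguments ppath_map {V K1 K2 f}.
Arguments ppath_mono {V K1 K2}.
Arguments ppath_full {V K P u v}.
Arguments full_dclosed {V K} P.

Section ComponentRetraction.
Variables (V : eqType) (K1 K2 : complex V) (f : V -> V).
Hypotheses (K1c : dclosed K1) (K2c : dclosed K2).
Hypothesis sub12 : forall sigma, K1 sigma -> K2 sigma.
Hypothesis f_vert : forall u, K2 [:: u] -> K1 [:: f u].
Hypothesis f_edge : forall u v, K2 [:: u; v] -> K1 [:: f u; f v].
Hypothesis f_id : forall u, K1 [:: u] -> f u = u.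
Hypothesis f_conn : forall u, K2 [:: u] -> ppath K2 u (f u).

Lemma retract_ppath u v : K1 [:: u] -> K1 [:: v] -> ppath K2 u v -> ppath K1 u v.
Proof. by move=> Ku Kv /(ppath_map f_vert f_edge); rewrite !f_id. Qed.

Lemma retract_pi0_bijective : pi0_induced_bijective K1 K2.
Proof.
split.
  move=> C [x [Kx ->]]; exists (Defs.comp K2 x); split.
  - by exists x; split => //; exact: sub12.
  - by exists x.
  - move=> D [x' [Kx' [Exx' ->]]].
    apply: (comp_eq K2c); apply: (ppath_mono sub12).
    exact: (ppath_sym K1c (comp_eq_ppath Kx' Exx')).
move=> D [z [Kz ->]].
have Kfz := f_vert _ Kz.
exists (Defs.comp K1 (f z)); split.
- by exists (f z).
- by exists (f z); split => //; split => //; exact: (comp_eq K2c (f_conn _ Kz)).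
- move=> C [x' [_ ->]] [x [Kx [-> Ezx]]].
  apply: (comp_eq K1c); apply: retract_ppath => //.
  exact: (ppath_trans (ppath_sym K2c (comp_eq_ppath (sub12 _ Kx) Ezx)) (f_conn _ Kz)).
Qed.

(* The full subcomplex of K1 on the vertices in the K2-component of y is
   connected: all of its vertices are joined to f y. *)
Lemma retract_fiber_connected y :
  K2 [:: y] -> connected (full K1 (fun x => Defs.comp K2 x = Defs.comp K2 y)).
Proof.
move=> Ky; set W := fun x => Defs.comp K2 x = Defs.comp K2 y.
have Wfy : W (f y) by rewrite /W (comp_eq K2c (f_conn _ Ky)).
have W_edge a b : K1 [:: a; b] -> W a -> W b.
  move=> Kab; rewrite /W => <-; symmetry.
  exact: (comp_eq K2c (ppath_mono sub12 _ _ (ppath_edge K1c Kab))).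
have reach u : full K1 W [:: u] -> ppath (full K1 W) (f y) u.
  move=> [Ku Wu]; apply: ppath_full W_edge _ => //.
  have Kyu : ppath K2 y u.
    by apply: comp_eq_ppath (sub12 _ Ku) _; symmetry; apply: Wu; rewrite inE.
  by have := ppath_map f_vert f_edge _ _ Kyu; rewrite (f_id _ Ku).
have fullc : dclosed (full K1 W) := full_dclosed W K1c.
split.
  by exists (f y); split; [exact: f_vert | move=> v; rewrite inE => /eqP ->].
by move=> u v Ku Kv; exact: ppath_trans (ppath_sym fullc (reach u Ku)) (reach v Kv).
Qed.

End ComponentRetraction.

Arguments retract_pi0_bijective {V K1 K2 f}.
Arguments retract_fiber_connected {V K1 K2 f}.

Section VietorisRips.
Variables (R : rcfType) (n : nat) (s : R).
Implicit Types (Z : seq 'rV[R]_n) (u v : 'rV[R]_n).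

Lemma VR_dclosed Z : dclosed (VR s Z).
Proof.
move=> sigma tau [_ [Hs Hd]] tau0 sub; split => //; split; first by move=> v /sub /Hs.
by move=> a b /sub Ha /sub Hb; apply: Hd.
Qed.

Lemma VR_sub Z y sigma : VR s Z sigma -> VR s (y :: Z) sigma.
Proof. by move=> [H0 [HZ Hd]]; split => //; split => // v /HZ vZ; rewrite inE vZ orbT. Qed.

Lemma VR_edge Z u v : u \in Z -> v \in Z -> dist u v <= s -> VR s Z [:: u; v].
Proof.
move=> uZ vZ duv; have s0 : 0 <= s := le_trans (dist_ge0 u v) duv.
split => //; split; first by move=> w; rewrite !inE => /orP[] /eqP ->.
by move=> a b; rewrite !inE => /orP[] /eqP -> /orP[] /eqP ->;
  rewrite ?dist_xx // dist_sym.
Qed.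

Lemma VR_vert Z u : 0 <= s -> u \in Z -> VR s Z [:: u].
Proof.
move=> s0 uZ; split => //; split; first by move=> v; rewrite inE => /eqP ->.
by move=> a b; rewrite !inE => /eqP -> /eqP ->; rewrite dist_xx.
Qed.

Lemma VR_vert_inv Z u : VR s Z [:: u] -> u \in Z.
Proof. by move=> [_ [HZ _]]; apply: HZ; rewrite inE. Qed.

Lemma VR_edge_inv Z u v : VR s Z [:: u; v] -> [/\ u \in Z, v \in Z & dist u v <= s].
Proof. by move=> [_ [HZ Hd]]; split; [apply: HZ | apply: HZ | apply: Hd];
  rewrite !inE eqxx ?orbT.
Qed.

End VietorisRips.

Arguments VR_dclosed {R n s Z}.
Arguments VR_sub {R n s Z} y sigma.
Arguments VR_edge {R n s Z u v}.
Arguments VR_vert {R n s Z u}.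
Arguments VR_vert_inv {R n s Z u}.
Arguments VR_edge_inv {R n s Z u v}.

Section NewPoint.
Variables (R : rcfType) (n : nat) (X : seq 'rV[R]_n) (y x0 : 'rV[R]_n) (s : R).
Hypotheses (yX : y \notin X) (x0X : x0 \in X) (y_x0 : dist y x0 <= s).
Hypothesis near : forall z, z \in X -> dist y z <= s -> dist x0 z <= s.

Definition retract (z : 'rV[R]_n) := if z == y then x0 else z.

Lemma retract_mem u : u \in y :: X -> retract u \in X.
Proof. by rewrite inE /retract; case: eqP. Qed.

Lemma retract_id u : u \in X -> retract u = u.
Proof. by move=> uX; rewrite /retract; case: eqP => // uy; move: yX; rewrite -uy uX. Qed.

Lemma retract_dist u v : u \in y :: X -> v \in y :: X -> dist u v <= s ->
  dist (retract u) (retract v) <= s.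
Proof.
rewrite !inE /retract.
case: (eqVneq u y) => [-> _|_ /= uX]; case: (eqVneq v y) => [-> _|_ /= vX] duv //.
- by rewrite dist_xx (le_trans (dist_ge0 y y)).
- exact: near.
- by rewrite dist_sym near // dist_sym.
Qed.

Lemma new_point_retraction :
  [/\ forall u, VR s (y :: X) [:: u] -> VR s X [:: retract u],
      forall u v, VR s (y :: X) [:: u; v] -> VR s X [:: retract u; retract v],
      forall u, VR s X [:: u] -> retract u = u
    & forall u, VR s (y :: X) [:: u] -> ppath (VR s (y :: X)) u (retract u)].
Proof.
have s0 : 0 <= s := le_trans (dist_ge0 y x0) y_x0.
split.
- by move=> u /VR_vert_inv /retract_mem; exact: VR_vert.
- move=> u v /VR_edge_inv [uY vY duv].
  by apply: VR_edge; rewrite ?retract_mem ?retract_dist.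
- by move=> u /VR_vert_inv; exact: retract_id.
- move=> u Ku; rewrite /retract; case: eqP => [->|_]; last exact: ppath_refl.
  by apply: (ppath_edge VR_dclosed); apply: VR_edge; rewrite ?inE ?eqxx ?x0X ?orbT.
Qed.

Lemma new_point_pi0_bijective : pi0_induced_bijective (VR s X) (VR s (y :: X)).
Proof.
have [r_vert r_edge r_id r_conn] := new_point_retraction.
exact: retract_pi0_bijective VR_dclosed VR_dclosed (VR_sub y)
  r_vert r_edge r_id r_conn.
Qed.

Lemma new_point_fiber_connected : connected (VsXy s X y).
Proof.
have [r_vert r_edge r_id r_conn] := new_point_retraction.
have s0 : 0 <= s := le_trans (dist_ge0 y x0) y_x0.
exact: retract_fiber_connected VR_dclosed VR_dclosed (VR_sub y)
  r_vert r_edge r_id r_conn y (VR_vert s0 (mem_head _ _)).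
Qed.

End NewPoint.

Arguments new_point_pi0_bijective {R n X y x0 s}.
Arguments new_point_fiber_connected {R n X y x0 s}.

Section PhaseChangeNumbers.
Variables (R : rcfType) (n : nat) (X : seq 'rV[R]_n).
Local Notation P := (phase X).

Lemma phase_mem a b : a \in X -> b \in X -> dist a b \in P.
Proof. by move=> aX bX; rewrite /phase mem_sort mem_undup; apply: allpairs_f. Qed.

Lemma phase_ge0 d : d \in P -> 0 <= d.
Proof.
by rewrite /phase mem_sort mem_undup => /allpairsP [[a b] [_ _ ->]]; exact: dist_ge0.
Qed.

Lemma phase_mono j k : (j <= k)%N -> (k < size P)%N -> nth 0 P j <= nth 0 P k.
Proof.
move=> jk kP; apply: (sorted_leq_nth le_trans lexx) => //.
- exact: sort_le_sorted.
- by rewrite inE (leq_ltn_trans jk).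
Qed.

Lemma phase_gap (s r : R) i : (i < size P)%N -> nth 0 P i <= s ->
  ((i.+1 < size P)%N -> s + r < nth 0 P i.+1) ->
  forall d, d \in P -> d < s + r -> d <= s.
Proof.
move=> iP si si1 d dP dsr; rewrite -(nth_index 0 dP).
have jP : (index d P < size P)%N by rewrite index_mem.
case: (leqP (index d P) i) => ji; first exact: le_trans (phase_mono _ _ ji iP) si.
have := phase_mono _ _ ji jP; rewrite nth_index //.
by have := si1 (leq_ltn_trans ji jP); lra.
Qed.

End PhaseChangeNumbers.

Arguments phase_mem {R n X a b}.
Arguments phase_ge0 {R n X d}.
Arguments phase_mono {R n X j k}.
Arguments phase_gap {R n X s r i}.

Theorem lemma11 (R : rcfType) (n : nat) (X : seq 'rV[R]_n) (y x0 : 'rV[R]_n)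
  (r s : R) (i : nat) :
  uniq X -> (1 < size X)%N -> y \notin X ->
  x0 \in X -> 0 < r -> dist y x0 < r ->
  (forall j, (j.+1 < size (phase X))%N ->
     r < nth 0 (phase X) j.+1 - nth 0 (phase X) j) ->
  (0 < i)%N -> (i < size (phase X))%N ->
  nth 0 (phase X) i <= s ->
  ((i.+1 < size (phase X))%N -> s + r < nth 0 (phase X) i.+1) ->
  connected (VsXy s X y) /\ pi0_induced_bijective (VR s X) (VR s (y :: X)).
Proof.
move=> _ _ yX x0X r0 y_x0 gap i_gt0 iP si si1.
(* r < s_1 - s_0 <= s_i <= s, so y is within s of x0 *)
have r_lt_s : r < s.
  have P1 : (1 < size (phase X))%N := leq_ltn_trans i_gt0 iP.
  have := gap 0%N P1; have := phase_mono (X := X) i_gt0 iP.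
  have := phase_ge0 (mem_nth 0 (ltnW P1)); lra.
have y_x0_s : dist y x0 <= s by lra.
(* a point of X within s of y is within s + r of x0, hence within s *)
have near z : z \in X -> dist y z <= s -> dist x0 z <= s.
  move=> zX yz; apply: phase_gap iP si si1 _ (phase_mem x0X zX) _.
  by have := dist_triangle x0 y z; rewrite (dist_sym x0 y); lra.
split.
- exact: new_point_fiber_connected yX x0X y_x0_s near.
- exact: new_point_pi0_bijective yX x0X y_x0_s near.
Qed.
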